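(* Let $G$ be a group generated by involutions (elements $i$ with $i^2=e$) and $H$ an abelian group (written additively). Assume $f:G\to H$ satisfies $f(xy)+f(xy^{-1})=2f(x)$ for all $x,y\in G$, with $f(e)=0$. Then: (I) $f(xyz)=f(xzy)$ for all $x,y,z\in G$. (II) Consequently, for any word $g=i_1\cdots i_r$ in involutions, swapping any adjacent pair $i_k,i_{k+1}$ does not change the value $f(g)$. *)

From HB Require Import structures.
From mathcomp Require Import all_boot all_algebra.
Set Implicit Arguments. Unset Strict Implicit. Unset Printing Implicit Defensive.
Import GRing.Theory.

Definition is_group (G : Type) (mul : G -> G -> G) (inv : G -> G) (e : G) : Prop :=
  (forall x y z, mul x (mul y z) = mul (mul x y) z) /\
  (forall x, mul e x = x) /\ (forall x, mul x e = x) /\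
  (forall x, mul x (inv x) = e) /\ (forall x, mul (inv x) x = e).

Definition involution (G : Type) (mul : G -> G -> G) (e : G) (i : G) : Prop :=
  mul i i = e.

Definition word_prod (G : Type) (mul : G -> G -> G) (e : G) (s : seq G) : G :=
  foldr mul e s.

Definition involution_word (G : Type) (mul : G -> G -> G) (e : G) (s : seq G) : Prop :=
  foldr (fun i P => involution mul e i /\ P) True s.

(* G is generated by involutions: since involutions are self-inverse, the
   generated subgroup consists exactly of finite products of involutions. *)
Definition generated_by_involutions (G : Type) (mul : G -> G -> G) (e : G) : Prop :=
  forall g : G, exists s : seq G, involution_word mul e s /\ g = word_prod mul e s.

From HB Require Import structures.
From mathcomp Require Import all_boot all_algebra.
Local Open Scope ring_scope.
Import GRing.Theory.
Set Implicit Arguments. Unset Strict Implicit.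

(* From [f(x) + f(x^-1) = 2 f(e) = 0] we get [f(x^-1) = -f(x)] and [2 f(i) = 0]
   for an involution [i]; the functional equation at [(i, y)] then reads
   [f(iy) - f(yi) = 0].  Induction on words gives [f(yw) = f(wy)] for every
   product [w] of involutions, hence for every [w].  Finally, for fixed [x] the
   function [v |-> f(xv) - f(x)] satisfies the same hypotheses, so
   [f(xyz) = f(xzy)].  Swapping two adjacent letters [ab] of a word then
   amounts to moving the block [ab] to the end of the word, replacing it by
   [ba] there, and moving it back. *)

Section Group.

Variables (G : Type) (mul : G -> G -> G) (inv : G -> G) (e : G).
Hypothesis hG : is_group mul inv e.

Let mulA : associative mul. Proof. by case: hG. Qed.
Let mul1g : left_id e mul. Proof. by case: hG => _ []. Qed.
Let mulg1 : right_id e mul. Proof. by case: hG => _ [_ []]. Qed.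
Let mulgV x : mul x (inv x) = e. Proof. by case: hG => _ [_ [_ []]]. Qed.
Let mulVg x : mul (inv x) x = e. Proof. by case: hG => _ [_ [_ []]]. Qed.

Lemma mul_eq1_inv u v : mul u v = e -> v = inv u.
Proof. by move=> uv; rewrite -[v]mul1g -(mulVg u) -mulA uv mulg1. Qed.

Lemma inv_involution i : involution mul e i -> inv i = i.
Proof. by move=> ii; rewrite -(mul_eq1_inv ii). Qed.

Lemma invM x y : inv (mul x y) = mul (inv y) (inv x).
Proof.
by symmetry; apply: mul_eq1_inv; rewrite -mulA (mulA y) mulgV mul1g mulgV.
Qed.

Lemma word_prod_cat s1 s2 :
  word_prod mul e (s1 ++ s2) = mul (word_prod mul e s1) (word_prod mul e s2).
Proof.
by rewrite /word_prod; elim: s1 => [|a s1 IH] /=; rewrite ?mul1g // IH mulA.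
Qed.

Definition jensen_fun (H : zmodType) (f : G -> H) :=
  (forall x y, f (mul x y) + f (mul x (inv y)) = f x *+ 2) /\ f e = 0.

Hypothesis hgen : generated_by_involutions mul e.

Section JensenFun.

Variables (H : zmodType) (f : G -> H).
Hypothesis hf : jensen_fun f.

Let f_eq x y : f (mul x y) + f (mul x (inv y)) = f x *+ 2.
Proof. by case: hf. Qed.
Let f_e : f e = 0. Proof. by case: hf. Qed.

Lemma f_inv x : f (inv x) = - f x.
Proof.
have := f_eq e x; rewrite !mul1g f_e mul0rn => /eqP.
by rewrite addr_eq0 => /eqP ->; rewrite opprK.
Qed.

Lemma f_involution_comm i y :
  involution mul e i -> f (mul i y) = f (mul y i).
Proof.
move=> ii; have inv_i := inv_involution ii.
have f2i : f i *+ 2 = 0 by rewrite -(f_eq i i) ii mulgV f_e addr0.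
apply/eqP; rewrite -subr_eq0 -f_inv invM inv_i.
by rewrite f_eq f2i.
Qed.

Lemma f_word_comm s y : involution_word mul e s ->
  f (mul y (word_prod mul e s)) = f (mul (word_prod mul e s) y).
Proof.
rewrite /word_prod; elim: s y => [|i s IH] y /=; first by rewrite mul1g mulg1.
case=> ii hs.
by rewrite mulA IH // -mulA (f_involution_comm _ ii) mulA.
Qed.

Lemma f_comm y z : f (mul y z) = f (mul z y).
Proof. by have [s [hs ->]] := hgen z; exact: f_word_comm. Qed.

End JensenFun.

Lemma jensen_fun_translate (H : zmodType) (f : G -> H) x :
  jensen_fun f -> jensen_fun (fun v => f (mul x v) - f x).
Proof.
case=> f_eq _; split=> [u v|]; last by rewrite mulg1 subrr.
by rewrite !mulA addrACA f_eq mulrnBl mulr2n opprD.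
Qed.

Lemma f_mul_swap_right (H : zmodType) (f : G -> H) x y z :
  jensen_fun f -> f (mul (mul x y) z) = f (mul (mul x z) y).
Proof.
move=> hf; rewrite -!mulA.
by apply: (addIr (- f x)); apply: (f_comm (jensen_fun_translate x hf)).
Qed.

Lemma f_word_prod_swap (H : zmodType) (f : G -> H) s1 s2 a b :
  jensen_fun f ->
  f (word_prod mul e (s1 ++ a :: b :: s2)) =
  f (word_prod mul e (s1 ++ b :: a :: s2)).
Proof.
move=> hf; rewrite !word_prod_cat /=.
set p := word_prod mul e s1; set q := word_prod mul e s2.
rewrite !mulA -(mulA p) (f_mul_swap_right _ _ _ hf) mulA.
by rewrite (f_mul_swap_right _ _ _ hf) -mulA (f_mul_swap_right _ _ _ hf) mulA.
Qed.

End Group.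

Theorem mainTheorem4 (G : Type) (mul : G -> G -> G) (inv : G -> G) (e : G)
  (H : zmodType) (f : G -> H)
  (hG : is_group mul inv e)
  (hgen : generated_by_involutions mul e)
  (hf : forall x y : G, f (mul x y) + f (mul x (inv y)) = f x *+ 2)
  (hfe : f e = 0) :
  (forall x y z : G, f (mul (mul x y) z) = f (mul (mul x z) y)) /\
  (forall (s1 s2 : seq G) (a b : G),
     involution_word mul e (s1 ++ a :: b :: s2) ->
     f (word_prod mul e (s1 ++ a :: b :: s2)) =
     f (word_prod mul e (s1 ++ b :: a :: s2))).
Proof.
have jensen_f : jensen_fun mul inv e f by [].
split=> [x y z | s1 s2 a b _].
- exact (f_mul_swap_right hG hgen x y z jensen_f).
- exact (f_word_prod_swap hG hgen s1 s2 a b jensen_f).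
Qed.
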